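(* Let $M\ge 1$ be an integer, let $U=\{0,1,\ldots,M-1\}$, and let $\phi:\binom{U}{2}\to\{\text{red},\text{blue}\}$ be an arbitrary $2$-coloring of the pairs of $U$. Let $H=H_\phi$ be the $4$-uniform hypergraph on $V=\{0,1,\ldots,2^M-1\}$ defined below. Then $H$ contains no copy of $K_5^{(4)}$, i.e., there is no $5$-element set $P\subseteq V$ all of whose $4$-element subsets are edges of $H$.
   Context: Every $a\in V=\{0,\ldots,2^M-1\}$ is written in binary as $a=\sum_{i=0}^{M-1}a(i)2^i$ with $a(i)\in\{0,1\}$. For $a\ne b$ in $V$, $\delta(a,b)$ denotes the largest index $i$ with $a(i)\ne b(i)$; thus $\delta(a,b)\in U$. For a pair $\{x,y\}$ of distinct elements of $U$ we write $\phi(x,y)=\phi(y,x)$ for its color. For a $4$-tuple $v_1<v_2<v_3<v_4$ of $V$, set $\delta_i=\delta(v_i,v_{i+1})$ for $i=1,2,3$. The $4$-tuple $\{v_1,v_2,v_3,v_4\}$ is an edge of $H$ if and only if one of the following holds: (i) $\delta_1<\delta_2<\delta_3$ or $\delta_1>\delta_2>\delta_3$, and $\phi(\delta_1,\delta_2)=\phi(\delta_2,\delta_3)\ne\phi(\delta_1,\delta_3)$; (ii) $\delta_1>\delta_2<\delta_3$, $\delta_1>\delta_3$, and $\phi(\delta_1,\delta_2)\ne\phi(\delta_2,\delta_3)$; (iii) $\delta_1>\delta_2<\delta_3$, $\delta_1<\delta_3$, and $\phi(\delta_1,\delta_2)=\phi(\delta_1,\delta_3)=\phi(\delta_2,\delta_3)$.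 (Consecutive values $\delta_i,\delta_{i+1}$ are always distinct, and in cases (ii),(iii) $\delta_1\neq\delta_3$ is required, so all colors above are of pairs of distinct elements.) *)

From mathcomp Require Import all_boot.
Unset Printing Implicit Defensive.

Definition bit (a i : nat) : bool := odd (a %/ 2 ^ i).

Definition delta (M a b : nat) : nat := \max_(i < M | bit a i != bit b i) i.

(* Edge condition for v1 < v2 < v3 < v4, colouring phi on pairs of U
   (colours encoded as bool). *)
Definition edge_cond (M : nat) (phi : nat -> nat -> bool) (v1 v2 v3 v4 : nat) : bool :=
  let d1 := delta M v1 v2 in
  let d2 := delta M v2 v3 in
  let d3 := delta M v3 v4 in
  [|| [&& ((d1 < d2 < d3) || (d3 < d2 < d1)),
          phi d1 d2 == phi d2 d3 & phi d1 d2 != phi d1 d3],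
      [&& d2 < d1, d2 < d3, d3 < d1 & phi d1 d2 != phi d2 d3]
    | [&& d2 < d1, d2 < d3, d1 < d3, phi d1 d2 == phi d1 d3 & phi d1 d3 == phi d2 d3]].

Definition hedge (M : nat) (phi : nat -> nat -> bool) (S : {set 'I_(2 ^ M)}) : Prop :=
  exists v1 v2 v3 v4 : 'I_(2 ^ M),
    [/\ v1 < v2, v2 < v3, v3 < v4, S = [set v1; v2; v3; v4]
      & edge_cond M phi v1 v2 v3 v4].

From mathcomp Require Import all_boot zify.

(* Order a putative K_5^(4) as v0 < ... < v4 and let a, b, c, d be the deltas of
   consecutive vertices.  The delta of v_i < v_j is the largest binary digit in
   which they differ, so it is the maximum of the consecutive deltas in between,
   and the deltas of v_i v_j and v_j v_k never coincide.  The five edge conditions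
   therefore only see the relative order of a, b, c, d and the colours of the
   pairs among them.  Compressing a, b, c, d monotonically into {0, ..., 3} leaves
   finitely many configurations, all of which are ruled out by computation. *)

Lemma bit_divn_exp x k j : bit (x %/ 2 ^ k) j = bit x (k + j).
Proof. by rewrite /bit -divnMA -expnD. Qed.

Lemma bit_small {M x j} : x < 2 ^ M -> M <= j -> bit x j = false.
Proof. by move=> ltx leMj; rewrite /bit divn_small // (leq_trans ltx) ?leq_pexp2l. Qed.

Lemma eq_bits x y : bit x =1 bit y -> x = y.
Proof.
suff eq_bits_lt n : forall x y, x < 2 ^ n -> y < 2 ^ n -> bit x =1 bit y -> x = y.
  by apply: (eq_bits_lt (x + y)); apply: leq_ltn_trans (ltn_expl _ (ltnSn 1));
    rewrite ?leq_addr ?leq_addl.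
elim: n => [|n IHn] {}x {}y ltx lty eq_xy.
  by move: ltx lty; rewrite expn0 !ltnS !leqn0 => /eqP-> /eqP->.
rewrite -[x]odd_double_half -[y]odd_double_half.
have := eq_xy 0; rewrite /bit !expn0 !divn1 => ->; congr (_ + _.*2).
apply: IHn => [||j]; rewrite -?divn2.
- rewrite expnS in ltx; lia.
- rewrite expnS in lty; lia.
by have := eq_xy j.+1; rewrite -addn1 addnC -!bit_divn_exp expn1.
Qed.

Lemma bit_leq_agree_above {x y k} : x <= y ->
  (forall j, k < j -> bit x j = bit y j) -> bit x k <= bit y k.
Proof.
move=> le_xy agree; set qx := x %/ 2 ^ k; set qy := y %/ 2 ^ k.
have half_q z : (z %/ 2 ^ k)./2 = z %/ 2 ^ k.+1 by rewrite -divn2 -divnMA expnSr.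
have eq_half : qx./2 = qy./2.
  rewrite !half_q; apply: eq_bits => j; rewrite !bit_divn_exp; apply: agree; lia.
have : odd qx + qx./2.*2 <= odd qy + qy./2.*2 by rewrite !odd_double_half leq_div2r.
by rewrite eq_half leq_add2r.
Qed.

Lemma delta_lt M a b : 0 < M -> delta M a b < M.
Proof.
move=> M_gt0; apply: (@leq_ltn_trans M.-1); last by rewrite ltn_predL.
by apply/bigmax_leqP => i _; rewrite -ltnS prednK.
Qed.

Lemma delta_eq M u v k : k < M -> bit u k != bit v k ->
  (forall j, k < j -> bit u j = bit v j) -> delta M u v = k.
Proof.
move=> ltkM neq_k agree; apply/eqP; rewrite eqn_leq (leq_bigmax_cond (Ordinal ltkM)) // andbT.
by apply/bigmax_leqP => j; apply: contraR; rewrite -ltnNge => /agree->.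
Qed.

Lemma delta_spec {M u v} : u < 2 ^ M -> v < 2 ^ M -> u != v ->
  [/\ delta M u v < M, bit u (delta M u v) != bit v (delta M u v)
    & forall j, delta M u v < j -> bit u j = bit v j].
Proof.
move=> ltu ltv neq_uv.
have [i0 neq_i0] : exists i0 : 'I_M, bit u i0 != bit v i0.
  apply/existsP; apply: contraR neq_uv; rewrite negb_exists => /forallP eq_lt.
  apply/eqP/eq_bits => j; have [ltjM | leMj] := ltnP j M.
    by apply/eqP; have := eq_lt (Ordinal ltjM); rewrite negbK.
  by rewrite (bit_small ltu leMj) (bit_small ltv leMj).
split.
- by apply: delta_lt; apply: leq_ltn_trans (ltn_ord i0).
- by rewrite /delta (bigmax_eq_arg i0 neq_i0); case: arg_maxnP.
move=> j ltj; have [ltjM | leMj] := ltnP j M; last first.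
  by rewrite (bit_small ltu leMj) (bit_small ltv leMj).
apply/eqP; apply: contraTT ltj; rewrite -leqNgt => neq_j.
exact: (leq_bigmax_cond (Ordinal ltjM)).
Qed.

Lemma delta_ltn_bits {M u v} : u < 2 ^ M -> v < 2 ^ M -> u < v ->
  ~~ bit u (delta M u v) && bit v (delta M u v).
Proof.
move=> ltu ltv lt_uv; have [_ neq_d agree] := delta_spec ltu ltv (negbT (ltn_eqF lt_uv)).
have := bit_leq_agree_above (ltnW lt_uv) agree.
by move: neq_d; case: (bit u _); case: (bit v _).
Qed.

Lemma delta_trans {M u v w} : u < 2 ^ M -> v < 2 ^ M -> w < 2 ^ M -> u < v -> v < w ->
  delta M u v != delta M v w /\ delta M u w = maxn (delta M u v) (delta M v w).
Proof.
move=> ltu ltv ltw lt_uv lt_vw.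
have [ltM1 _ agree1] := delta_spec ltu ltv (negbT (ltn_eqF lt_uv)).
have [ltM2 _ agree2] := delta_spec ltv ltw (negbT (ltn_eqF lt_vw)).
move: (delta_ltn_bits ltu ltv lt_uv) (delta_ltn_bits ltv ltw lt_vw).
set d1 := delta M u v; set d2 := delta M v w => /andP[u1 v1] /andP[v2 w2].
have [lt12 | lt21 | eq12] := ltngtP d1 d2; last by rewrite eq12 (negbTE v2) in v1.
- split => //.
  apply: delta_eq => // [|j ltj].
    by rewrite agree1 // (negbTE v2) w2.
  by rewrite agree1 ?agree2 //; apply: ltn_trans ltj.
- split => //.
  apply: delta_eq => // [|j ltj].
    by rewrite -agree2 // (negbTE u1) v1.
  by rewrite agree1 ?agree2 //; apply: ltn_trans ltj.
Qed.

Definition edge_pat (phi : nat -> nat -> bool) d1 d2 d3 : bool :=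
  [|| [&& (d1 < d2 < d3) || (d3 < d2 < d1),
          phi d1 d2 == phi d2 d3 & phi d1 d2 != phi d1 d3],
      [&& d2 < d1, d2 < d3, d3 < d1 & phi d1 d2 != phi d2 d3]
    | [&& d2 < d1, d2 < d3, d1 < d3, phi d1 d2 == phi d1 d3 & phi d1 d3 == phi d2 d3]].

Lemma edge_condE M phi v1 v2 v3 v4 :
  edge_cond M phi v1 v2 v3 v4 = edge_pat phi (delta M v1 v2) (delta M v2 v3) (delta M v3 v4).
Proof. by []. Qed.

(* The delta sequences of the five 4-subsets of a chain with consecutive deltas
   [a, b, c, d]: by [delta_trans], the delta of [v_i, v_j] is the maximum of the
   consecutive deltas in between. *)
Definition clique_pat phi a b c d :=
  [&& edge_pat phi a b c, edge_pat phi b c d, edge_pat phi (maxn a b) c d,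
      edge_pat phi a (maxn b c) d & edge_pat phi a b (maxn c d)].

(* [delta v_i v_j != delta v_j v_k] for all [i < j < k]. *)
Definition consistent_deltas a b c d :=
  [&& a != b, a != maxn b c, a != maxn (maxn b c) d, maxn a b != c,
      maxn a b != maxn c d, maxn (maxn a b) c != d, b != c, b != maxn c d,
      maxn b c != d & c != d].

Lemma maxn_in {D : {pred nat}} {x y} : x \in D -> y \in D -> maxn x y \in D.
Proof. by case: leqP. Qed.

Section OrderInvariance.

Variables (D : {pred nat}) (r : nat -> nat).
Hypothesis r_mono : {in D &, {mono r : x y / x < y}}.

Lemma leq_mono_in : {in D &, {mono r : x y / x <= y}}.
Proof. by move=> x y Dx Dy; apply/idP/idP; apply: contraTT; rewrite -!ltnNge r_mono. Qed.

Lemma eq_mono_in : {in D &, forall x y, (r x == r y) = (x == y)}.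
Proof. by move=> x y Dx Dy; rewrite !eqn_leq !leq_mono_in. Qed.

Lemma maxn_mono_in : {in D &, {morph r : x y / maxn x y}}.
Proof. by move=> x y Dx Dy; rewrite /maxn r_mono //; case: ifP. Qed.

Lemma consistent_deltas_mono_in a b c d : a \in D -> b \in D -> c \in D -> d \in D ->
  consistent_deltas (r a) (r b) (r c) (r d) = consistent_deltas a b c d.
Proof.
move=> Da Db Dc Dd; have Dab := maxn_in Da Db; have Dbc := maxn_in Db Dc.
have Dcd := maxn_in Dc Dd; have Dabc := maxn_in Dab Dc; have Dbcd := maxn_in Dbc Dd.
by rewrite /consistent_deltas -!maxn_mono_in // !eq_mono_in.
Qed.

Variables psi psi' : nat -> nat -> bool.
Hypothesis psi_r : {in D &, forall x y, psi x y = psi' (r x) (r y)}.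

Lemma edge_pat_mono_in x y z : x \in D -> y \in D -> z \in D ->
  edge_pat psi x y z = edge_pat psi' (r x) (r y) (r z).
Proof. by move=> Dx Dy Dz; rewrite /edge_pat !r_mono // !psi_r. Qed.

Lemma clique_pat_mono_in a b c d : a \in D -> b \in D -> c \in D -> d \in D ->
  clique_pat psi a b c d = clique_pat psi' (r a) (r b) (r c) (r d).
Proof.
move=> Da Db Dc Dd; have Dab := maxn_in Da Db; have Dbc := maxn_in Db Dc.
have Dcd := maxn_in Dc Dd.
by rewrite /clique_pat -!maxn_mono_in // !edge_pat_mono_in.
Qed.

End OrderInvariance.

Lemma rank_exists (xs : seq nat) : exists r f : nat -> nat,
  [/\ {in xs &, {mono r : x y / x < y}}, {in xs, forall x, r x < size xs}
    & {in xs, cancel r f}].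
Proof.
pose s := sort leq (undup xs).
have mem_s x : (x \in s) = (x \in xs) by rewrite mem_sort mem_undup.
have le_s : sorted leq s := sort_sorted leq_total _.
have lt_s : sorted ltn s by rewrite ltn_sorted_uniq_leq sort_uniq undup_uniq le_s.
exists (index^~ s), (nth 0 s); split=> [x y xs_x xs_y | x xs_x | x xs_x].
- rewrite -!mem_s in xs_x xs_y; apply/idP/idP; first exact: (sorted_ltn_index ltn_trans lt_s).
  by apply: contraTT; rewrite -!leqNgt; exact: (sorted_leq_index leq_trans leqnn le_s).
- by rewrite -mem_s -index_mem in xs_x; apply: leq_trans xs_x _; rewrite size_sort size_undup.
- by apply: nth_index; rewrite mem_s.
Qed.

(* A colouring of {0, ..., 3} as the list of its values on the pairs [i <= j],
   the pair [(i, j)] being stored at position [i + 'C(j.+1, 2)]. *)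
Definition table_col (s : seq bool) i j := nth false s (minn i j + 'C((maxn i j).+1, 2)).

Definition col_table (psi : nat -> nat -> bool) :=
  [seq psi i j | j <- iota 0 4, i <- iota 0 j.+1].

Lemma col_tableK psi : (forall i j, psi i j = psi j i) ->
  {in gtn 4 &, forall i j, psi i j = table_col (col_table psi) i j}.
Proof.
by move=> psiC i j; do 5?[case: i => [|i] //]; do 5?[case: j => [|j] //]; rewrite /= ?psiC.
Qed.

Fixpoint bitseqs n : seq bitseq :=
  if n is n'.+1 then [seq false :: s | s <- bitseqs n'] ++ [seq true :: s | s <- bitseqs n']
  else [:: [::]].

Lemma mem_bitseqs n s : size s = n -> s \in bitseqs n.
Proof.
elim: n s => [|n IHn] [|b s] //= [/IHn s_n].
by rewrite mem_cat; case: b; rewrite map_f ?orbT.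
Qed.

Definition small_clique_free :=
  all (fun a => all (fun b => all (fun c => all (fun d =>
    consistent_deltas a b c d ==>
      all (fun s => ~~ clique_pat (table_col s) a b c d) (bitseqs 10))
  (iota 0 4)) (iota 0 4)) (iota 0 4)) (iota 0 4).

Lemma small_clique_freeP : small_clique_free.
Proof. by vm_compute. Qed.

Lemma no_small_clique_pat psi a b c d : (forall i j, psi i j = psi j i) ->
  a < 4 -> b < 4 -> c < 4 -> d < 4 ->
  consistent_deltas a b c d -> ~~ clique_pat psi a b c d.
Proof.
move=> psiC lta ltb ltc ltd ok_abcd.
rewrite (@clique_pat_mono_in _ id _ _ _ (col_tableK _ psiC)) //.
move: small_clique_freeP => /allP/(_ a); rewrite mem_iota => /(_ lta)/allP/(_ b).
rewrite mem_iota => /(_ ltb)/allP/(_ c); rewrite mem_iota => /(_ ltc)/allP/(_ d).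
rewrite mem_iota ok_abcd => /(_ ltd)/allP; apply.
by rewrite mem_bitseqs // size_map.
Qed.

Lemma no_clique_pat psi a b c d : (forall i j, psi i j = psi j i) ->
  consistent_deltas a b c d -> ~~ clique_pat psi a b c d.
Proof.
move=> psiC ok_abcd; have [r [f [r_mono r_lt4 rK]]] := rank_exists [:: a; b; c; d].
have [xs_a xs_b xs_c xs_d] : [/\ a \in [:: a; b; c; d], b \in [:: a; b; c; d],
    c \in [:: a; b; c; d] & d \in [:: a; b; c; d]] by rewrite !inE !eqxx !orbT.
pose psi' i j := psi (f i) (f j).
have psi_r : {in [:: a; b; c; d] &, forall x y, psi x y = psi' (r x) (r y)}.
  by move=> x y xs_x xs_y; rewrite /psi' !rK.
rewrite (clique_pat_mono_in _ _ r_mono _ psi' psi_r) //.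
apply: no_small_clique_pat; rewrite ?r_lt4 ?(consistent_deltas_mono_in _ _ r_mono) //.
by move=> i j; apply: psiC.
Qed.

Lemma clique_pat_minmax {M phi a b c d} :
  (forall x y, x < M -> y < M -> x != y -> phi x y = phi y x) ->
  a < M -> b < M -> c < M -> d < M ->
  clique_pat phi a b c d = clique_pat (fun x y => phi (minn x y) (maxn x y)) a b c d.
Proof.
move=> phiC; pose psi x y := phi (minn x y) (maxn x y).
have phi_psi : {in gtn M &, forall x y, phi x y = psi x y}.
  move=> x y ltx lty; rewrite /psi; have [// | lt_yx | -> //] := ltngtP x y.
  by rewrite phiC // gtn_eqF.
exact: (clique_pat_mono_in _ id _ _ psi phi_psi).
Qed.

Lemma enum_sorted {N} (A : {set 'I_N}) : sorted (fun x y : 'I_N => x < y) (enum A).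
Proof.
rewrite /enum_mem -enumT; apply: sorted_filter; first exact: (@ltn_trans).
by have := iota_ltn_sorted 0 N; rewrite -val_enum_ord sorted_map.
Qed.

Lemma enum_set4 {N} {v1 v2 v3 v4 : 'I_N} : v1 < v2 -> v2 < v3 -> v3 < v4 ->
  enum [set v1; v2; v3; v4] = [:: v1; v2; v3; v4].
Proof.
move=> lt12 lt23 lt34; apply: (@irr_sorted_eq _ (fun x y : 'I_N => x < y)).
- exact: (@ltn_trans).
- by move=> x; rewrite /= ltnn.
- exact: enum_sorted.
- by rewrite /= lt12 lt23 lt34.
by move=> x; rewrite mem_enum !inE !orbA.
Qed.

Lemma card5_chain {N} {P : {set 'I_N}} : #|P| = 5 -> exists w0 w1 w2 w3 w4 : 'I_N,
  [/\ w0 < w1 < w2, w2 < w3 < w4 & P = [set w0; w1; w2; w3; w4]].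
Proof.
move=> card_P; have := enum_sorted P; have := card_P; rewrite cardE.
case def_P : (enum P) => [|w0 [|w1 [|w2 [|w3 [|w4 [|? ?]]]]]] //= _ /and5P[l01 l12 l23 l34 _].
exists w0, w1, w2, w3, w4; rewrite l01 l12 l23 l34; split=> //.
by apply/setP => x; rewrite -mem_enum def_P !inE !orbA.
Qed.

Lemma edge_cond_of_hedge M phi (v1 v2 v3 v4 : 'I_(2 ^ M)) :
  v1 < v2 -> v2 < v3 -> v3 < v4 ->
  hedge M phi [set v1; v2; v3; v4] -> edge_cond M phi v1 v2 v3 v4.
Proof.
move=> lt12 lt23 lt34 [u1 [u2 [u3 [u4 [l12 l23 l34 eq_set edge_u]]]]].
move: (enum_set4 lt12 lt23 lt34); rewrite eq_set enum_set4 //.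
by case=> <- <- <- <-.
Qed.

Lemma chain_clique_pat {M phi w0 w1 w2 w3 w4} :
  w4 < 2 ^ M -> w0 < w1 -> w1 < w2 -> w2 < w3 -> w3 < w4 ->
  edge_cond M phi w0 w1 w2 w3 -> edge_cond M phi w1 w2 w3 w4 ->
  edge_cond M phi w0 w2 w3 w4 -> edge_cond M phi w0 w1 w3 w4 ->
  edge_cond M phi w0 w1 w2 w4 ->
  let: (a, b, c, d) := (delta M w0 w1, delta M w1 w2, delta M w2 w3, delta M w3 w4) in
  consistent_deltas a b c d && clique_pat phi a b c d.
Proof.
move=> lt4 l01 l12 l23 l34; rewrite !edge_condE => e0123 e1234 e0234 e0134 e0124.
have lt3 := ltn_trans l34 lt4; have lt2 := ltn_trans l23 lt3.
have lt1 := ltn_trans l12 lt2; have lt0 := ltn_trans l01 lt1.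
have l02 := ltn_trans l01 l12; have l13 := ltn_trans l12 l23.
have l24 := ltn_trans l23 l34; have l03 := ltn_trans l02 l23.
have l14 := ltn_trans l13 l34.
have [n012 d02] := delta_trans lt0 lt1 lt2 l01 l12.
have [n123 d13] := delta_trans lt1 lt2 lt3 l12 l23.
have [n234 d24] := delta_trans lt2 lt3 lt4 l23 l34.
have [n023 d03] := delta_trans lt0 lt2 lt3 l02 l23.
have [n134 d14] := delta_trans lt1 lt3 lt4 l13 l34.
have [n013 _] := delta_trans lt0 lt1 lt3 l01 l13.
have [n014 _] := delta_trans lt0 lt1 lt4 l01 l14.
have [n024 _] := delta_trans lt0 lt2 lt4 l02 l24.
have [n034 _] := delta_trans lt0 lt3 lt4 l03 l34.
have [n124 _] := delta_trans lt1 lt2 lt4 l12 l24.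
rewrite d02 in e0234 n023 n024 d03; rewrite d13 in e0134 n013 d14 n134.
rewrite d24 in e0124 n024 n124; rewrite d03 in n034; rewrite d14 in n014.
by rewrite /consistent_deltas /clique_pat n012 n013 n014 n023 n024 n034 n123 n124 n134 n234
  e0123 e1234 e0234 e0134 e0124.
Qed.

Theorem mainTheorem2 (M : nat) (phi : nat -> nat -> bool) :
  1 <= M ->
  (forall x y, x < M -> y < M -> x != y -> phi x y = phi y x) ->
  ~ exists P : {set 'I_(2 ^ M)},
      #|P| = 5 /\ (forall S : {set 'I_(2 ^ M)}, S \subset P -> #|S| = 4 -> hedge M phi S).
Proof.
move=> M_gt0 phiC [P [card_P edges]].
have [w0 [w1 [w2 [w3 [w4 [/andP[l01 l12] /andP[l23 l34] def_P]]]]]] := card5_chain card_P.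
have [P0 P1 P2 P3 P4] : [/\ w0 \in P, w1 \in P, w2 \in P, w3 \in P & w4 \in P].
  by rewrite def_P !inE !eqxx !orbT.
have edge (x1 x2 x3 x4 : 'I_(2 ^ M)) : x1 < x2 -> x2 < x3 -> x3 < x4 ->
    x1 \in P -> x2 \in P -> x3 \in P -> x4 \in P -> edge_cond M phi x1 x2 x3 x4.
  move=> x12 x23 x34 Px1 Px2 Px3 Px4; apply: edge_cond_of_hedge => //.
  by apply: edges; rewrite ?cardE ?enum_set4 // !subUset !sub1set Px1 Px2 Px3 Px4.
have l02 := ltn_trans l01 l12; have l13 := ltn_trans l12 l23; have l24 := ltn_trans l23 l34.
move: (chain_clique_pat (ltn_ord w4) l01 l12 l23 l34 (edge _ _ _ _ l01 l12 l23 P0 P1 P2 P3)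
  (edge _ _ _ _ l12 l23 l34 P1 P2 P3 P4) (edge _ _ _ _ l02 l23 l34 P0 P2 P3 P4)
  (edge _ _ _ _ l01 l13 l34 P0 P1 P3 P4) (edge _ _ _ _ l01 l12 l24 P0 P1 P2 P4)).
move=> /= /andP[ok_abcd]; apply/negP.
rewrite (clique_pat_minmax phiC) ?delta_lt //.
by apply: no_clique_pat ok_abcd => x y; rewrite minnC maxnC.
Qed.
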